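(* Let $\mathscr{A}$ be an abelian category, $\mathbb{T}$ a finite category, $\mathbb{S}$ a replete full subcategory of $\mathbb{T}$, $\mathscr{F}\subseteq\mathscr{A}^\mathbb{T}$ the full subcategory of functors vanishing on all objects not in $\mathbb{S}$, with reflection $\mathsf{F}$ and unit $\eta$ (so $(\eta_F)_T=\mathrm{cok}([F(t)]_{t\in[T]})$). Let $\alpha:F\to G$ be a regular epimorphism in $\mathscr{A}^\mathbb{T}$. Then the following are equivalent: (1) $\alpha$ is a trivial extension with respect to $\mathscr{F}$; (2) for every $T\in\mathbb{T}$, the morphisms $\alpha_T$ and $(\eta_F)_T$ are jointly monomorphic. Moreover, for $T\notin\mathbb{S}$ the condition in (2) amounts to $\alpha_T$ being an isomorphism.
   Context: For $T\in\mathbb{T}$, $[T]$ is the set of morphisms $t:T'\to T$ with $T'\notin\mathbb{S}$, $d(t):=T'$, and $[F(t)]_{t\in[T]}:\bigoplus_{t\in[T]}F(d(t))\to F(T)$ is induced by the $F(t)$. An extension is a regular epimorphism in $\mathscr{A}^\mathbb{T}$. An extension $\alpha:F\to G$ is a trivial extension with respect to $\mathscr{F}$ if the naturality square $\eta_G\circ\alpha=\mathsf{F}(\alpha)\circ\eta_F$ (with $\mathsf{F}(\alpha):\mathsf{F}(F)\to\mathsf{F}(G)$) is a pullback in $\mathscr{A}^\mathbb{T}$. *)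

From Stdlib Require Import List FunctionalExtensionality ProofIrrelevance.

Set Implicit Arguments.

Record Category := {
  Ob : Type;
  Hom : Ob -> Ob -> Type;
  idm : forall a, Hom a a;
  comp : forall a b c, Hom b c -> Hom a b -> Hom a c;
  comp_id_l : forall a b (f : Hom a b), comp (idm b) f = f;
  comp_id_r : forall a b (f : Hom a b), comp f (idm a) = f;
  comp_assoc : forall a b c d (f : Hom a b) (g : Hom b c) (h : Hom c d),
      comp h (comp g f) = comp (comp h g) f
}.

Arguments idm {C} a : rename.
Arguments comp {C a b c} _ _ : rename.
Notation "g \o f" := (comp g f) (at level 40, left associativity).

Section Basic.
Variable C : Category.

Definition is_mono {a b : Ob C} (f : Hom C a b) : Prop :=
  forall x (g h : Hom C x a), f \o g = f \o h -> g = h.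

Definition is_iso {a b : Ob C} (f : Hom C a b) : Prop :=
  exists g : Hom C b a, g \o f = idm a /\ f \o g = idm b.

Definition isomorphic (a b : Ob C) : Prop :=
  exists f : Hom C a b, is_iso f.

Definition jointly_mono {x a b : Ob C} (f : Hom C x a) (g : Hom C x b) : Prop :=
  forall y (u v : Hom C y x), f \o u = f \o v -> g \o u = g \o v -> u = v.

Definition is_zero_object (z : Ob C) : Prop :=
  (forall x, exists f : Hom C x z, forall g, g = f) /\
  (forall x, exists f : Hom C z x, forall g, g = f).

Definition is_zero_mor {a b : Ob C} (f : Hom C a b) : Prop :=
  exists z (u : Hom C a z) (v : Hom C z b), is_zero_object z /\ f = v \o u.

Definition is_kernel {k a b : Ob C} (m : Hom C k a) (f : Hom C a b) : Prop :=
  is_zero_mor (f \o m) /\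
  forall x (h : Hom C x a), is_zero_mor (f \o h) ->
    exists u : Hom C x k, m \o u = h /\ forall u', m \o u' = h -> u' = u.

Definition is_cokernel {a b q : Ob C} (e : Hom C b q) (f : Hom C a b) : Prop :=
  is_zero_mor (e \o f) /\
  forall x (h : Hom C b x), is_zero_mor (h \o f) ->
    exists u : Hom C q x, u \o e = h /\ forall u', u' \o e = h -> u' = u.

Definition is_product {p a b : Ob C} (p1 : Hom C p a) (p2 : Hom C p b) : Prop :=
  forall x (f : Hom C x a) (g : Hom C x b),
    exists u : Hom C x p, (p1 \o u = f /\ p2 \o u = g) /\
      forall u', p1 \o u' = f -> p2 \o u' = g -> u' = u.

Definition is_coproduct {a b p : Ob C} (i1 : Hom C a p) (i2 : Hom C b p) : Prop :=
  forall x (f : Hom C a x) (g : Hom C b x),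
    exists u : Hom C p x, (u \o i1 = f /\ u \o i2 = g) /\
      forall u', u' \o i1 = f -> u' \o i2 = g -> u' = u.

Definition is_coequalizer {a b q : Ob C} (f g : Hom C a b) (e : Hom C b q) : Prop :=
  e \o f = e \o g /\
  forall x (h : Hom C b x), h \o f = h \o g ->
    exists u : Hom C q x, u \o e = h /\ forall u', u' \o e = h -> u' = u.

Definition is_regular_epi {b q : Ob C} (e : Hom C b q) : Prop :=
  exists a (f g : Hom C a b), is_coequalizer f g e.

Definition is_pullback {p a b c : Ob C}
    (p1 : Hom C p a) (p2 : Hom C p b) (f : Hom C a c) (g : Hom C b c) : Prop :=
  f \o p1 = g \o p2 /\
  forall x (h1 : Hom C x a) (h2 : Hom C x b), f \o h1 = g \o h2 ->
    exists u : Hom C x p, (p1 \o u = h1 /\ p2 \o u = h2) /\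
      forall u', p1 \o u' = h1 -> p2 \o u' = h2 -> u' = u.

Definition is_epi {a b : Ob C} (f : Hom C a b) : Prop :=
  forall x (g h : Hom C b x), g \o f = h \o f -> g = h.

Definition is_abelian : Prop :=
  (exists z, is_zero_object z) /\
  (forall a b, exists p (p1 : Hom C p a) (p2 : Hom C p b), is_product p1 p2) /\
  (forall a b, exists p (i1 : Hom C a p) (i2 : Hom C b p), is_coproduct i1 i2) /\
  (forall a b (f : Hom C a b), exists k (m : Hom C k a), is_kernel m f) /\
  (forall a b (f : Hom C a b), exists q (e : Hom C b q), is_cokernel e f) /\
  (forall a b (m : Hom C a b), is_mono m -> exists c (f : Hom C b c), is_kernel m f) /\
  (forall a b (e : Hom C a b), is_epi e -> exists c (f : Hom C c a), is_cokernel e f).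

Definition finite_category : Prop :=
  (exists l : list (Ob C), forall a, In a l) /\
  (forall a b, exists l : list (Hom C a b), forall f, In f l).

(** A replete full subcategory, given by a predicate on objects closed
    under isomorphism. *)
Definition replete (S : Ob C -> Prop) : Prop :=
  forall a b, S a -> isomorphic a b -> S b.

End Basic.

Record Functor (C D : Category) := {
  fob :> Ob C -> Ob D;
  fmap : forall a b, Hom C a b -> Hom D (fob a) (fob b);
  fmap_id : forall a, fmap a a (idm a) = idm (fob a);
  fmap_comp : forall a b c (f : Hom C a b) (g : Hom C b c),
      fmap a c (g \o f) = fmap b c g \o fmap a b f
}.
Arguments fmap {C D} _ {a b} _.

Record NatTrans {C D : Category} (F G : Functor C D) := {
  component :> forall a : Ob C, Hom D (F a) (G a);
  naturality : forall a b (f : Hom C a b),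
      component b \o fmap F f = fmap G f \o component a
}.

Section FunCat.
Variables C D : Category.

Lemma nat_trans_eq (F G : Functor C D) (s t : NatTrans F G) :
  (forall a, s a = t a) -> s = t.
Proof.
  destruct s as [s Hs], t as [t Ht]; simpl; intros E.
  assert (s = t) by (apply functional_extensionality_dep; exact E).
  subst t. f_equal. apply proof_irrelevance.
Qed.

Program Definition nt_id (F : Functor C D) : NatTrans F F :=
  {| component := fun a => idm (F a) |}.
Next Obligation. now rewrite comp_id_l, comp_id_r. Qed.

Program Definition nt_comp (F G H : Functor C D)
  (t : NatTrans G H) (s : NatTrans F G) : NatTrans F H :=
  {| component := fun a => t a \o s a |}.
Next Obligation.
  rewrite <- comp_assoc, naturality, comp_assoc, naturality, comp_assoc.
  reflexivity.
Qed.

Program Definition FunCat : Category :=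
  {| Ob := Functor C D; Hom := fun F G => NatTrans F G;
     idm := nt_id; comp := nt_comp |}.
Next Obligation. apply nat_trans_eq; intros; simpl; apply comp_id_l. Qed.
Next Obligation. apply nat_trans_eq; intros; simpl; apply comp_id_r. Qed.
Next Obligation. apply nat_trans_eq; intros; simpl; apply comp_assoc. Qed.

End FunCat.

Section Reflection.
Variables (T A : Category) (S : Ob T -> Prop).

Definition in_F (F : Functor T A) : Prop :=
  forall t : Ob T, ~ S t -> is_zero_object A (F t).

Definition is_reflection (R : Functor T A -> Functor T A)
    (eta : forall F, NatTrans F (R F)) : Prop :=
  forall F, in_F (R F) /\
    forall G, in_F G -> forall beta : NatTrans F G,
      exists gamma : NatTrans (R F) G,
        @comp (FunCat T A) _ _ _ gamma (eta F) = beta /\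
        forall gamma' : NatTrans (R F) G,
          @comp (FunCat T A) _ _ _ gamma' (eta F) = beta -> gamma' = gamma.

(** Trivial extension: the naturality square  η_G ∘ α = 𝖥(α) ∘ η_F  is a
    pullback in A^T, where 𝖥(α) : 𝖥F → 𝖥G is the (unique) morphism
    induced by the reflection. *)
Definition trivial_extension (R : Functor T A -> Functor T A)
    (eta : forall F, NatTrans F (R F)) {F G : Functor T A}
    (alpha : NatTrans F G) : Prop :=
  forall Ralpha : NatTrans (R F) (R G),
    @comp (FunCat T A) _ _ _ Ralpha (eta F)
      = @comp (FunCat T A) _ _ _ (eta G) alpha ->
    @is_pullback (FunCat T A) F G (R F) (R G) alpha (eta F) (eta G) Ralpha.

End Reflection.

(* Kernels, cokernels and pullbacks in [A^T] are computed pointwise, so everything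
   reduces to a question about the squares [eta_G t \o alpha t = Ralpha t \o eta_F t].
   The legs of a pullback are jointly monic, which gives (1) => (2).  Conversely, the
   reflection preserves the cokernel presentation [alpha = cok (ker alpha)], so each
   [Ralpha t] is the cokernel of [eta_F t \o ker (alpha t)]; in an abelian category a
   commutative square with an epic side [a], whose opposite side is the cokernel of the
   adjacent side restricted to [ker a], is a pullback as soon as [a] and that adjacent side
   are jointly monic.  Off [S] the reflection vanishes, so joint monicity just says that the
   epimorphism [alpha t] is monic. *)

From Stdlib Require Import ClassicalEpsilon ChoiceFacts.
Set Implicit Arguments.

Section Generic.
Variable C : Category.

Lemma zero_object_hom_from_unique z : is_zero_object C z ->
  forall x (f g : Hom C z x), f = g.
Proof. intros [_ Hz] x f g. destruct (Hz x) as [u Hu]. now rewrite (Hu f), (Hu g). Qed.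

Lemma zero_object_hom_to_unique z : is_zero_object C z ->
  forall x (f g : Hom C x z), f = g.
Proof. intros [Hz _] x f g. destruct (Hz x) as [u Hu]. now rewrite (Hu f), (Hu g). Qed.

Lemma zero_mor_unique a b (f g : Hom C a b) :
  is_zero_mor C f -> is_zero_mor C g -> f = g.
Proof.
  intros [z [u [v [Hz ->]]]] [z' [u' [v' [Hz' ->]]]].
  destruct (proj2 Hz z') as [e _]. destruct (proj2 Hz' z) as [e' _].
  rewrite (zero_object_hom_to_unique Hz _ u (e' \o u')),
    (zero_object_hom_from_unique Hz _ v (v' \o e)).
  rewrite comp_assoc, <- (comp_assoc _ _ _ _ _ e' e v').
  now rewrite (zero_object_hom_from_unique Hz' _ (e \o e') (idm z')), comp_id_r.
Qed.

Lemma zero_mor_precomp a b c (g : Hom C a b) (f : Hom C b c) :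
  is_zero_mor C f -> is_zero_mor C (f \o g).
Proof.
  intros [z [u [v [Hz ->]]]]. exists z, (u \o g), v. split; auto.
  now rewrite comp_assoc.
Qed.

Lemma zero_mor_postcomp a b c (f : Hom C a b) (g : Hom C b c) :
  is_zero_mor C f -> is_zero_mor C (g \o f).
Proof.
  intros [z [u [v [Hz ->]]]]. exists z, u, (g \o v). split; auto.
  now rewrite comp_assoc.
Qed.

Lemma kernel_mono k a b (m : Hom C k a) (f : Hom C a b) :
  is_kernel C m f -> is_mono C m.
Proof.
  intros [Hmf Hker] x g h E.
  destruct (Hker x (m \o g)) as [u [_ Hu]].
  { rewrite comp_assoc. now apply zero_mor_precomp. }
  now rewrite (Hu g eq_refl), (Hu h (eq_sym E)).
Qed.

Lemma cokernel_epi a b q (e : Hom C b q) (f : Hom C a b) :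
  is_cokernel C e f -> is_epi C e.
Proof.
  intros [Hef Hcok] x g h E.
  destruct (Hcok x (g \o e)) as [u [_ Hu]].
  { rewrite <- comp_assoc. now apply zero_mor_postcomp. }
  now rewrite (Hu g eq_refl), (Hu h (eq_sym E)).
Qed.

Lemma kernel_of_zero_is_iso k a b (m : Hom C k a) (f : Hom C a b) :
  is_kernel C m f -> is_zero_mor C f -> is_iso C m.
Proof.
  intros Hm Hf. destruct (proj2 Hm a (idm a)) as [u [Hu _]].
  { now apply zero_mor_precomp. }
  exists u. split; auto.
  apply (kernel_mono Hm). now rewrite comp_assoc, Hu, comp_id_l, comp_id_r.
Qed.

Lemma iso_mono a b (f : Hom C a b) : is_iso C f -> is_mono C f.
Proof.
  intros [g [Hgf _]] x u v E.
  now rewrite <- (comp_id_l _ _ _ u), <- (comp_id_l _ _ _ v), <- Hgf,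
    <- !comp_assoc, E.
Qed.

Lemma mono_jointly_mono_self a b (m : Hom C a b) :
  is_mono C m -> jointly_mono C m m.
Proof. intros Hm y u v E _. exact (Hm y u v E). Qed.

Lemma jointly_mono_zero_target_iff {x a z} (f : Hom C x a) (g : Hom C x z) :
  is_zero_object C z -> (jointly_mono C f g <-> is_mono C f).
Proof.
  intros Hz. split.
  - intros Hfg y u v E. apply Hfg; auto. apply (zero_object_hom_to_unique Hz).
  - intros Hf y u v E _. exact (Hf y u v E).
Qed.

Lemma epi_from_zero_object z b (e : Hom C z b) :
  is_zero_object C z -> is_epi C e -> is_zero_object C b.
Proof.
  intros Hz He.
  assert (Hfrom : forall x (g h : Hom C b x), g = h).
  { intros x g h. apply He. apply (zero_object_hom_from_unique Hz). }
  split.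
  - intros x. destruct (proj1 Hz x) as [t _]. exists (e \o t). intros g.
    destruct (proj1 Hz b) as [s _].
    rewrite <- (comp_id_l _ _ _ g), (Hfrom b (idm b) (e \o s)), <- comp_assoc.
    f_equal. apply (zero_object_hom_to_unique Hz).
  - intros x. destruct (proj2 Hz x) as [t _]. destruct (proj1 Hz b) as [s _].
    exists (t \o s). intros g. apply Hfrom.
Qed.

Lemma cokernel_comp_iso a b q q' (f : Hom C a b) (c : Hom C b q) (v : Hom C q q') :
  is_cokernel C c f -> is_iso C v -> is_cokernel C (v \o c) f.
Proof.
  intros [Hcf Hcok] [w [Hwv Hvw]]. split.
  - rewrite <- comp_assoc. now apply zero_mor_postcomp.
  - intros x h Hh. destruct (Hcok x h Hh) as [u [Hu Huniq]].
    exists (u \o w). split.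
    + now rewrite <- comp_assoc, (comp_assoc _ _ _ _ _ c v w), Hwv, comp_id_l.
    + intros u' Hu'. rewrite <- (Huniq (u' \o v)).
      * now rewrite <- comp_assoc, Hvw, comp_id_r.
      * now rewrite <- comp_assoc.
Qed.

Lemma pullback_jointly_mono p a b c (p1 : Hom C p a) (p2 : Hom C p b)
  (f : Hom C a c) (g : Hom C b c) :
  is_pullback C p1 p2 f g -> jointly_mono C p1 p2.
Proof.
  intros [Hsq Hpb] y u v E1 E2.
  destruct (Hpb y (p1 \o u) (p2 \o u)) as [w [_ Hw]].
  { now rewrite !comp_assoc, Hsq. }
  now rewrite (Hw u), (Hw v).
Qed.

Lemma product_jointly_mono p a b (p1 : Hom C p a) (p2 : Hom C p b) :
  is_product C p1 p2 -> jointly_mono C p1 p2.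
Proof.
  intros Hp y u v E1 E2. destruct (Hp y (p1 \o u) (p2 \o u)) as [w [_ Hw]].
  now rewrite (Hw u), (Hw v).
Qed.

Lemma pullback_of_iso p p' a b c (p1 : Hom C p a) (p2 : Hom C p b)
  (f : Hom C a c) (g : Hom C b c) (q1 : Hom C p' a) (q2 : Hom C p' b) (i : Hom C p' p) :
  is_pullback C p1 p2 f g -> is_iso C i -> p1 \o i = q1 -> p2 \o i = q2 ->
  is_pullback C q1 q2 f g.
Proof.
  intros [Hsq Hpb] [j [Hji Hij]] <- <-. split.
  - now rewrite !comp_assoc, Hsq.
  - intros x h1 h2 Eh. destruct (Hpb x h1 h2 Eh) as [u [[Hu1 Hu2] Hu]].
    assert (Hiju : i \o (j \o u) = u) by now rewrite comp_assoc, Hij, comp_id_l.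
    exists (j \o u). split.
    + now rewrite <- !comp_assoc, Hiju.
    + intros u' E1 E2.
      rewrite <- (comp_id_l _ _ _ u'), <- Hji, <- comp_assoc. f_equal.
      apply Hu; now rewrite comp_assoc.
Qed.

Lemma regular_epi_is_epi b q (e : Hom C b q) : is_regular_epi C e -> is_epi C e.
Proof.
  intros [a [f [g [Hfg Hcoeq]]]] x u v E.
  destruct (Hcoeq x (u \o e)) as [w [_ Hw]].
  { now rewrite <- !comp_assoc, Hfg. }
  now rewrite (Hw u eq_refl), (Hw v (eq_sym E)).
Qed.

End Generic.

Section Abelian.
Variable A : Category.
Hypothesis HA : is_abelian A.

Lemma zero_mor_exists a b : exists f : Hom A a b, is_zero_mor A f.
Proof.
  pose proof HA as [[z Hz] _]. destruct (proj1 Hz a) as [u _].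
  destruct (proj2 Hz b) as [v _]. now exists (v \o u), z, u, v.
Qed.

Lemma mono_is_kernel_of_cokernel a b q (m : Hom A a b) (e : Hom A b q) :
  is_mono A m -> is_cokernel A e m -> is_kernel A m e.
Proof.
  intros Hm He. pose proof HA as (_ & _ & _ & _ & _ & Hmono_ker & _).
  destruct (Hmono_ker _ _ m Hm) as [c [f Hmf]].
  split; [apply He |].
  intros x h Hh. destruct (proj2 He c f (proj1 Hmf)) as [f' [Hf' _]].
  apply (proj2 Hmf). rewrite <- Hf', <- comp_assoc. now apply zero_mor_postcomp.
Qed.

Lemma epi_is_cokernel_of_kernel k a b (e : Hom A a b) (m : Hom A k a) :
  is_epi A e -> is_kernel A m e -> is_cokernel A e m.
Proof.
  intros He Hm. pose proof HA as (_ & _ & _ & _ & _ & _ & Hepi_cok).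
  destruct (Hepi_cok _ _ e He) as [c [f Hef]].
  split; [apply Hm |].
  intros x h Hh. destruct (proj2 Hm c f (proj1 Hef)) as [f' [Hf' _]].
  apply (proj2 Hef). rewrite <- Hf', comp_assoc. now apply zero_mor_precomp.
Qed.

Lemma mono_zero_cokernel_is_iso a b q (m : Hom A a b) (e : Hom A b q) :
  is_mono A m -> is_cokernel A e m -> is_zero_mor A e -> is_iso A m.
Proof.
  intros Hm He He0. exact (kernel_of_zero_is_iso (mono_is_kernel_of_cokernel Hm He) He0).
Qed.

Lemma mono_epi_is_iso a b (m : Hom A a b) : is_mono A m -> is_epi A m -> is_iso A m.
Proof.
  intros Hm Hme. pose proof HA as (_ & _ & _ & _ & Hcok & _).
  destruct (Hcok _ _ m) as [q [e He]]. destruct (zero_mor_exists b q) as [z Hz].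
  apply (mono_zero_cokernel_is_iso Hm He).
  replace e with z; [exact Hz |].
  apply Hme, zero_mor_unique; [now apply zero_mor_precomp | apply He].
Qed.

Lemma equalizer_exists a b (x y : Hom A a b) :
  exists e (j : Hom A e a), x \o j = y \o j /\
    forall w (h : Hom A w a), x \o h = y \o h ->
      exists u, j \o u = h /\ forall u', j \o u' = h -> u' = u.
Proof.
  pose proof HA as (_ & Hprod & _ & Hker & _ & Hmono_ker & _).
  destruct (Hprod a b) as [p [p1 [p2 Hp]]].
  destruct (Hp a (idm a) x) as [s [[Hs1 Hs2] _]].
  destruct (Hp a (idm a) y) as [t [[Ht1 Ht2] _]].
  assert (Hs : is_mono A s).
  { intros w g h E. now rewrite <- (comp_id_l _ _ _ g), <- (comp_id_l _ _ _ h), <- Hs1,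
      <- !comp_assoc, E. }
  destruct (Hmono_ker _ _ s Hs) as [c [f Hsf]].
  destruct (Hker _ _ (f \o t)) as [J [j Hj]].
  destruct (proj2 Hsf J (t \o j)) as [i [Hi _]].
  { rewrite comp_assoc. apply Hj. }
  assert (i = j) as ->.
  { now rewrite <- (comp_id_l _ _ _ j), <- Ht1, <- comp_assoc, <- Hi, comp_assoc, Hs1,
      comp_id_l. }
  exists J, j. split.
  - now rewrite <- Hs2, <- Ht2, <- !comp_assoc, Hi.
  - intros w h Hh.
    assert (Hth : t \o h = s \o h).
    { apply (product_jointly_mono Hp); rewrite !comp_assoc.
      - now rewrite Ht1, Hs1.
      - now rewrite Ht2, Hs2. }
    destruct (proj2 Hj w h) as [u Hu].
    { rewrite <- comp_assoc, Hth, comp_assoc. apply zero_mor_precomp, Hsf. }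
    now exists u.
Qed.

Lemma pullback_exists a b c (f : Hom A a c) (g : Hom A b c) :
  exists p (p1 : Hom A p a) (p2 : Hom A p b), is_pullback A p1 p2 f g.
Proof.
  pose proof HA as (_ & Hprod & _).
  destruct (Hprod a b) as [q [q1 [q2 Hq]]].
  destruct (equalizer_exists _ _ (f \o q1) (g \o q2)) as [e [j [Hj Heq]]].
  exists e, (q1 \o j), (q2 \o j). split.
  - now rewrite !comp_assoc.
  - intros x h1 h2 Eh.
    destruct (Hq x h1 h2) as [w [[Hw1 Hw2] Hw]].
    destruct (Heq x w) as [u [Hu Huniq]].
    { now rewrite <- !comp_assoc, Hw1, Hw2. }
    exists u. split.
    + now rewrite <- !comp_assoc, Hu.
    + intros u' E1 E2. apply Huniq, Hw; now rewrite comp_assoc.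
Qed.

Lemma epi_of_zero_cokernel a b q (f : Hom A a b) (e : Hom A b q) :
  is_cokernel A e f -> is_zero_mor A e -> is_epi A f.
Proof.
  intros He He0 X x y Exy.
  destruct (equalizer_exists _ _ x y) as [E [j [Hj Heq]]].
  destruct (Heq _ f Exy) as [f' [Hf' _]].
  assert (Hjm : is_mono A j).
  { intros w g h Eg. destruct (Heq w (j \o g)) as [u [_ Hu]].
    - now rewrite !comp_assoc, Hj.
    - now rewrite (Hu g), (Hu h). }
  pose proof HA as (_ & _ & _ & _ & Hcok & _).
  destruct (Hcok _ _ j) as [c [ej Hej]].
  destruct (proj2 He c ej) as [e' [He' _]].
  { rewrite <- Hf', comp_assoc. apply zero_mor_precomp, Hej. }
  assert (Hej0 : is_zero_mor A ej) by (rewrite <- He'; now apply zero_mor_postcomp).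
  destruct (mono_zero_cokernel_is_iso Hjm Hej Hej0) as [ji [_ Hji]].
  now rewrite <- (comp_id_r _ _ _ x), <- (comp_id_r _ _ _ y), <- Hji, !comp_assoc, Hj.
Qed.

(* The comparison map [i : F -> P] into the pullback is monic by joint monicity and epic
   because its cokernel vanishes: that cokernel kills [ker p1 = i \o k \o w], so it
   factors through the epimorphism [p1], hence through [a]. *)
Lemma epi_jointly_mono_pullback {K F G B D} {a : Hom A F G} {b : Hom A F B}
  {g : Hom A G D} {h : Hom A B D} {k : Hom A K F}
  (Ha : is_epi A a) (Hk : is_kernel A k a) (Hsq : g \o a = h \o b)
  (Hh : is_cokernel A h (b \o k)) (Hab : jointly_mono A a b) :
  is_pullback A a b g h.
Proof.
  destruct (pullback_exists _ _ _ g h) as [P [p1 [p2 Hpb]]].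
  destruct (proj2 Hpb F a b Hsq) as [i [[Hi1 Hi2] _]].
  assert (Him : is_mono A i).
  { intros y u v E. apply Hab.
    - now rewrite <- Hi1, <- !comp_assoc, E.
    - now rewrite <- Hi2, <- !comp_assoc, E. }
  assert (Hp1 : is_epi A p1).
  { intros y x1 x2 E. apply Ha. now rewrite <- Hi1, !comp_assoc, E. }
  pose proof HA as (_ & _ & _ & Hker & Hcok & _).
  destruct (Hker _ _ p1) as [L [l Hl]].
  assert (Hbk : is_kernel A (b \o k) h).
  { apply mono_is_kernel_of_cokernel; [| exact Hh].
    intros y u v E. apply (kernel_mono Hk), Hab.
    - apply zero_mor_unique; rewrite comp_assoc; apply zero_mor_precomp, Hk.
    - now rewrite !comp_assoc. }
  destruct (proj2 Hbk L (p2 \o l)) as [w [Hw _]].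
  { rewrite comp_assoc, <- (proj1 Hpb), <- comp_assoc. apply zero_mor_postcomp, Hl. }
  assert (Hl_factor : i \o (k \o w) = l).
  { apply (pullback_jointly_mono Hpb).
    - rewrite comp_assoc, Hi1. apply zero_mor_unique; [| apply Hl].
      rewrite comp_assoc. apply zero_mor_precomp, Hk.
    - now rewrite comp_assoc, Hi2, comp_assoc. }
  destruct (Hcok _ _ i) as [Q [q Hq]].
  destruct (proj2 (epi_is_cokernel_of_kernel Hp1 Hl) Q q) as [q' [Hq' _]].
  { rewrite <- Hl_factor, comp_assoc. apply zero_mor_precomp, Hq. }
  destruct (zero_mor_exists G Q) as [z Hz].
  assert (q' = z) as ->.
  { apply Ha, zero_mor_unique.
    - rewrite <- Hi1, comp_assoc, Hq'. apply Hq.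
    - now apply zero_mor_precomp. }
  assert (Hq0 : is_zero_mor A q) by (rewrite <- Hq'; now apply zero_mor_precomp).
  exact (pullback_of_iso Hpb (mono_zero_cokernel_is_iso Him Hq Hq0) Hi1 Hi2).
Qed.
End Abelian.

Definition dependent_choice : DependentFunctionalChoice :=
  non_dep_dep_functional_choice choice.

Notation "s ∘ t" := (@comp (FunCat _ _) _ _ _ s t) (at level 40, left associativity).

Section FunctorCategory.
Variables T A : Category.

Lemma component_eq (F G : Functor T A) (s t : NatTrans F G) : s = t -> forall x, s x = t x.
Proof. now intros ->. Qed.

Section Lift.
Context {F1 F2 : Functor T A} {O : Ob T -> Ob A}
  {m1 : forall t, Hom A (O t) (F1 t)} {m2 : forall t, Hom A (O t) (F2 t)}.
Hypothesis m_jointly_mono : forall t, jointly_mono A (m1 t) (m2 t).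
Hypothesis lift_exists : forall t t' (f : Hom T t t'), exists u : Hom A (O t) (O t'),
  m1 t' \o u = fmap F1 f \o m1 t /\ m2 t' \o u = fmap F2 f \o m2 t.

Definition lift_fmap {t t'} (f : Hom T t t') : Hom A (O t) (O t') :=
  proj1_sig (constructive_indefinite_description _ (lift_exists _ _ f)).

Lemma lift_fmap_spec {t t'} (f : Hom T t t') :
  m1 t' \o lift_fmap f = fmap F1 f \o m1 t /\ m2 t' \o lift_fmap f = fmap F2 f \o m2 t.
Proof. exact (proj2_sig (constructive_indefinite_description _ (lift_exists _ _ f))). Qed.

Lemma lift_fmap_id t : lift_fmap (idm t) = idm (O t).
Proof.
  destruct (lift_fmap_spec (idm t)) as [H1 H2]. apply m_jointly_mono.
  - now rewrite H1, fmap_id, comp_id_l, comp_id_r.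
  - now rewrite H2, fmap_id, comp_id_l, comp_id_r.
Qed.

Lemma lift_fmap_comp a b c (f : Hom T a b) (g : Hom T b c) :
  lift_fmap (g \o f) = lift_fmap g \o lift_fmap f.
Proof.
  destruct (lift_fmap_spec (g \o f)) as [H1 H2].
  destruct (lift_fmap_spec f) as [Hf1 Hf2]. destruct (lift_fmap_spec g) as [Hg1 Hg2].
  apply m_jointly_mono.
  - now rewrite H1, comp_assoc, Hg1, <- comp_assoc, Hf1, fmap_comp, comp_assoc.
  - now rewrite H2, comp_assoc, Hg2, <- comp_assoc, Hf2, fmap_comp, comp_assoc.
Qed.

Definition lift_functor : Functor T A :=
  Build_Functor T A O (@lift_fmap) lift_fmap_id lift_fmap_comp.

Definition lift_proj1 : NatTrans lift_functor F1 :=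
  Build_NatTrans lift_functor F1 m1 (fun a b f => proj1 (lift_fmap_spec f)).

Definition lift_proj2 : NatTrans lift_functor F2 :=
  Build_NatTrans lift_functor F2 m2 (fun a b f => proj2 (lift_fmap_spec f)).

End Lift.

Section Descent.
Context {E : Functor T A} {O : Ob T -> Ob A} {e : forall t, Hom A (E t) (O t)}.
Hypothesis e_epi : forall t, is_epi A (e t).
Hypothesis descent_exists : forall t t' (f : Hom T t t'), exists u : Hom A (O t) (O t'),
  u \o e t = e t' \o fmap E f.

Definition descent_fmap {t t'} (f : Hom T t t') : Hom A (O t) (O t') :=
  proj1_sig (constructive_indefinite_description _ (descent_exists _ _ f)).

Lemma descent_fmap_spec {t t'} (f : Hom T t t') : descent_fmap f \o e t = e t' \o fmap E f.
Proof. exact (proj2_sig (constructive_indefinite_description _ (descent_exists _ _ f))). Qed.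

Lemma descent_fmap_id t : descent_fmap (idm t) = idm (O t).
Proof. apply e_epi. now rewrite descent_fmap_spec, fmap_id, comp_id_l, comp_id_r. Qed.

Lemma descent_fmap_comp a b c (f : Hom T a b) (g : Hom T b c) :
  descent_fmap (g \o f) = descent_fmap g \o descent_fmap f.
Proof.
  apply e_epi. now rewrite descent_fmap_spec, <- comp_assoc, descent_fmap_spec, comp_assoc,
    descent_fmap_spec, fmap_comp, comp_assoc.
Qed.

Definition descent_functor : Functor T A :=
  Build_Functor T A O (@descent_fmap) descent_fmap_id descent_fmap_comp.

Definition descent_nat : NatTrans E descent_functor :=
  Build_NatTrans E descent_functor e (fun a b f => eq_sym (descent_fmap_spec f)).

End Descent.

Lemma pointwise_pullback_is_pullback {P X Y Z : Functor T A}
  {p1 : NatTrans P X} {p2 : NatTrans P Y} {f : NatTrans X Z} {g : NatTrans Y Z}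
  (Hpb : forall t, is_pullback A (p1 t) (p2 t) (f t) (g t)) :
  @is_pullback (FunCat T A) P X Y Z p1 p2 f g.
Proof.
  split.
  - apply nat_trans_eq. intros t. apply (Hpb t).
  - intros H h1 h2 Eh.
    destruct (dependent_choice (fun t => Hom A (H t) (P t))
      (fun t u => p1 t \o u = h1 t /\ p2 t \o u = h2 t)) as [u Hu].
    { intros t. destruct (proj2 (Hpb t) (H t) (h1 t) (h2 t) (component_eq Eh t))
        as [u [Hu _]]. now exists u. }
    assert (Hnat : forall a b (k : Hom T a b), u b \o fmap H k = fmap P k \o u a).
    { intros a b k. apply (pullback_jointly_mono (Hpb b)).
      - rewrite !comp_assoc, (proj1 (Hu b)), (naturality p1), <- comp_assoc, (proj1 (Hu a)).
        apply naturality.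
      - rewrite !comp_assoc, (proj2 (Hu b)), (naturality p2), <- comp_assoc, (proj2 (Hu a)).
        apply naturality. }
    exists (Build_NatTrans H P u Hnat). split.
    + split; apply nat_trans_eq; intros t; apply (Hu t).
    + intros u' E1 E2. apply nat_trans_eq. intros t. apply (pullback_jointly_mono (Hpb t)).
      * simpl. now rewrite (proj1 (Hu t)), <- (component_eq E1 t).
      * simpl. now rewrite (proj2 (Hu t)), <- (component_eq E2 t).
Qed.

Lemma pointwise_epi_is_epi (F G : Functor T A) (s : NatTrans F G) :
  (forall t, is_epi A (s t)) -> @is_epi (FunCat T A) F G s.
Proof.
  intros Hs X x y E. apply nat_trans_eq. intros t. exact (Hs t _ _ _ (component_eq E t)).
Qed.

Lemma nat_factor_through_pointwise_epi (F G X : Functor T A)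
  (s : NatTrans F G) (h : NatTrans F X) :
  (forall t, is_epi A (s t)) -> (forall t, exists u : Hom A (G t) (X t), u \o s t = h t) ->
  exists u : NatTrans G X, u ∘ s = h.
Proof.
  intros Hs Hex.
  destruct (dependent_choice (fun t => Hom A (G t) (X t)) (fun t u => u \o s t = h t) Hex)
    as [u Hu].
  assert (Hnat : forall a b (f : Hom T a b), u b \o fmap G f = fmap X f \o u a).
  { intros a b f. apply (Hs a).
    now rewrite <- !comp_assoc, <- (naturality s), comp_assoc, Hu, Hu, naturality. }
  exists (Build_NatTrans G X u Hnat). apply nat_trans_eq. exact Hu.
Qed.

End FunctorCategory.

Section AbelianFunctorCategory.
Variables T A : Category.
Hypothesis HA : is_abelian A.

Lemma kernel_functor_exists (F G : Functor T A) (s : NatTrans F G) :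
  exists (K : Functor T A) (k : NatTrans K F), forall t, is_kernel A (k t) (s t).
Proof.
  destruct (dependent_choice (fun t => {K : Ob A & Hom A K (F t)})
    (fun t k => is_kernel A (projT2 k) (s t))) as [ker Hker].
  { intros t. pose proof HA as (_ & _ & _ & Hk & _).
    destruct (Hk _ _ (s t)) as [K [m Hm]]. now exists (existT _ K m). }
  set (m := fun t => projT2 (ker t)).
  assert (Hm : forall t, jointly_mono A (m t) (m t)).
  { intros t. exact (mono_jointly_mono_self (kernel_mono (Hker t))). }
  assert (Hex : forall t t' (f : Hom T t t'), exists u,
    m t' \o u = fmap F f \o m t /\ m t' \o u = fmap F f \o m t).
  { intros t t' f. destruct (proj2 (Hker t') _ (fmap F f \o m t)) as [u [Hu _]].
    - rewrite comp_assoc, naturality, <- comp_assoc. apply zero_mor_postcomp, Hker.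
    - now exists u. }
  now exists (lift_functor Hm Hex), (lift_proj1 Hm Hex).
Qed.

Lemma cokernel_functor_exists (F G : Functor T A) (s : NatTrans F G) :
  exists (Q : Functor T A) (q : NatTrans G Q), forall t, is_cokernel A (q t) (s t).
Proof.
  destruct (dependent_choice (fun t => {Q : Ob A & Hom A (G t) Q})
    (fun t q => is_cokernel A (projT2 q) (s t))) as [cok Hcok].
  { intros t. pose proof HA as (_ & _ & _ & _ & Hc & _).
    destruct (Hc _ _ (s t)) as [Q [e He]]. now exists (existT _ Q e). }
  set (e := fun t => projT2 (cok t)).
  assert (He : forall t, is_epi A (e t)) by (intros t; exact (cokernel_epi (Hcok t))).
  assert (Hex : forall t t' (f : Hom T t t'), exists u, u \o e t = e t' \o fmap G f).
  { intros t t' f. destruct (proj2 (Hcok t) _ (e t' \o fmap G f)) as [u [Hu _]].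
    - rewrite <- comp_assoc, <- naturality, comp_assoc. apply zero_mor_precomp, Hcok.
    - now exists u. }
  now exists (descent_functor He Hex), (descent_nat He Hex).
Qed.

Lemma pullback_functor_exists (X Y Z : Functor T A) (f : NatTrans X Z) (g : NatTrans Y Z) :
  exists (P : Functor T A) (p1 : NatTrans P X) (p2 : NatTrans P Y),
    forall t, is_pullback A (p1 t) (p2 t) (f t) (g t).
Proof.
  destruct (dependent_choice (fun t => {P : Ob A & (Hom A P (X t) * Hom A P (Y t))%type})
    (fun t p => is_pullback A (fst (projT2 p)) (snd (projT2 p)) (f t) (g t))) as [pb Hpb].
  { intros t. destruct (pullback_exists HA _ _ _ (f t) (g t)) as [P [p1 [p2 Hp]]].
    now exists (existT _ P (p1, p2)). }
  set (p1 := fun t => fst (projT2 (pb t))). set (p2 := fun t => snd (projT2 (pb t))).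
  assert (Hp : forall t, jointly_mono A (p1 t) (p2 t)).
  { intros t. exact (pullback_jointly_mono (Hpb t)). }
  assert (Hex : forall t t' (k : Hom T t t'), exists u,
    p1 t' \o u = fmap X k \o p1 t /\ p2 t' \o u = fmap Y k \o p2 t).
  { intros t t' k. destruct (proj2 (Hpb t') _ (fmap X k \o p1 t) (fmap Y k \o p2 t))
      as [u [Hu _]].
    - rewrite !comp_assoc, (naturality f), (naturality g), <- !comp_assoc.
      f_equal. apply Hpb.
    - now exists u. }
  now exists (lift_functor Hp Hex), (lift_proj1 Hp Hex), (lift_proj2 Hp Hex).
Qed.

Lemma zero_nat_exists (X Y : Functor T A) :
  exists z : NatTrans X Y, forall t, is_zero_mor A (z t).
Proof.
  destruct (dependent_choice (fun t => Hom A (X t) (Y t)) (fun t z => is_zero_mor A z))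
    as [z Hz].
  { intros t. apply (zero_mor_exists HA). }
  assert (Hnat : forall a b (f : Hom T a b), z b \o fmap X f = fmap Y f \o z a).
  { intros a b f. apply zero_mor_unique; [apply zero_mor_precomp | apply zero_mor_postcomp];
      apply Hz. }
  now exists (Build_NatTrans X Y z Hnat).
Qed.

Lemma epi_pointwise (F G : Functor T A) (s : NatTrans F G) :
  @is_epi (FunCat T A) F G s -> forall t, is_epi A (s t).
Proof.
  intros Hs t.
  destruct (cokernel_functor_exists s) as [Q [q Hq]].
  destruct (zero_nat_exists G Q) as [z Hz].
  assert (q = z) as Hqz.
  { apply Hs, nat_trans_eq. intros x. simpl.
    apply zero_mor_unique; [apply Hq | apply zero_mor_precomp, Hz]. }
  apply (epi_of_zero_cokernel HA (Hq t)). rewrite Hqz. apply Hz.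
Qed.

(* [P] is isomorphic to the pointwise pullback, which is pointwise jointly monic. *)
Lemma pullback_pointwise_jointly_mono (P X Y Z : Functor T A)
  (p1 : NatTrans P X) (p2 : NatTrans P Y) (f : NatTrans X Z) (g : NatTrans Y Z) :
  @is_pullback (FunCat T A) P X Y Z p1 p2 f g -> forall t, jointly_mono A (p1 t) (p2 t).
Proof.
  intros Hpb.
  destruct (pullback_functor_exists f g) as [P' [q1 [q2 Hq]]].
  pose proof (pointwise_pullback_is_pullback Hq) as Hq'.
  destruct (proj2 Hq' P p1 p2 (proj1 Hpb)) as [c [[Hc1 Hc2] _]].
  destruct (proj2 Hpb P' q1 q2 (proj1 Hq')) as [d [[Hd1 Hd2] _]].
  assert (Hdc : d ∘ c = @idm (FunCat T A) P).
  { apply (pullback_jointly_mono Hpb).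
    - now rewrite comp_assoc, Hd1, Hc1, comp_id_r.
    - now rewrite comp_assoc, Hd2, Hc2, comp_id_r. }
  intros t y u v E1 E2.
  assert (Ecu : c t \o u = c t \o v).
  { apply (pullback_jointly_mono (Hq t)).
    - rewrite !comp_assoc. change (q1 t \o c t) with ((q1 ∘ c) t). now rewrite Hc1.
    - rewrite !comp_assoc. change (q2 t \o c t) with ((q2 ∘ c) t). now rewrite Hc2. }
  rewrite <- (comp_id_l _ _ _ u), <- (comp_id_l _ _ _ v).
  change (idm (P t)) with ((@idm (FunCat T A) P) t). rewrite <- Hdc. simpl.
  now rewrite <- !comp_assoc, Ecu.
Qed.

End AbelianFunctorCategory.

Section Reflection.
Variables (T A : Category) (S : Ob T -> Prop).
Hypothesis HA : is_abelian A.
Variables (R : Functor T A -> Functor T A) (eta : forall F, NatTrans F (R F)).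
Hypothesis Hrefl : is_reflection S R eta.

Lemma reflection_in_F F : in_F S (R F).
Proof. exact (proj1 (Hrefl F)). Qed.

Lemma reflection_zero_outside F {t} : ~ S t -> is_zero_object A (R F t).
Proof. exact (proj1 (Hrefl F) t). Qed.

Lemma reflection_factor F X : in_F S X ->
  forall beta : NatTrans F X, exists gamma : NatTrans (R F) X, gamma ∘ eta F = beta.
Proof.
  intros HX beta. destruct (proj2 (Hrefl F) X HX beta) as [gamma [Hgamma _]].
  now exists gamma.
Qed.

Lemma reflection_ext F X : in_F S X ->
  forall gamma gamma' : NatTrans (R F) X, gamma ∘ eta F = gamma' ∘ eta F -> gamma = gamma'.
Proof.
  intros HX gamma gamma' E.
  destruct (proj2 (Hrefl F) X HX (gamma ∘ eta F)) as [g [_ Hg]].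
  now rewrite (Hg gamma eq_refl), (Hg gamma' (eq_sym E)).
Qed.

(* The reflection preserves the cokernel [alpha = cok k]: [R alpha] is isomorphic to the
   cokernel [c] of [eta_F \o k], with inverse isomorphisms [v] and [w'] obtained from the
   universal properties of [c] and of [eta_G]. *)
Lemma reflection_cokernel {F G K : Functor T A} {alpha : NatTrans F G} {k : NatTrans K F}
  {Ralpha : NatTrans (R F) (R G)} :
  (forall t, is_epi A (alpha t)) -> (forall t, is_kernel A (k t) (alpha t)) ->
  Ralpha ∘ eta F = eta G ∘ alpha ->
  forall t, is_cokernel A (Ralpha t) (eta F t \o k t).
Proof.
  intros Hepi Hk HR.
  destruct (cokernel_functor_exists HA (eta F ∘ k)) as [C [c Hc]].
  assert (HC : in_F S C).
  { intros t Ht.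
    exact (epi_from_zero_object (reflection_zero_outside F Ht) (cokernel_epi (Hc t))). }
  destruct (nat_factor_through_pointwise_epi alpha (c ∘ eta F) Hepi) as [w Hw].
  { intros t.
    destruct (proj2 (epi_is_cokernel_of_kernel HA (Hepi t) (Hk t)) _ (c t \o eta F t))
      as [u [Hu _]].
    - rewrite <- comp_assoc. apply Hc.
    - now exists u. }
  destruct (reflection_factor HC w) as [w' Hw'].
  assert (Hw'R : w' ∘ Ralpha = c).
  { apply (reflection_ext HC). now rewrite <- comp_assoc, HR, comp_assoc, Hw', Hw. }
  destruct (nat_factor_through_pointwise_epi c Ralpha (fun t => cokernel_epi (Hc t)))
    as [v Hv].
  { intros t. destruct (proj2 (Hc t) _ (Ralpha t)) as [u [Hu _]].
    - simpl. rewrite comp_assoc. change (Ralpha t \o eta F t) with ((Ralpha ∘ eta F) t).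
      rewrite HR. simpl. rewrite <- comp_assoc. apply zero_mor_postcomp, Hk.
    - now exists u. }
  assert (Hvw : v ∘ w = eta G).
  { apply (pointwise_epi_is_epi Hepi). now rewrite <- comp_assoc, Hw, comp_assoc, Hv. }
  assert (Hvw' : v ∘ w' = @idm (FunCat T A) (R G)).
  { apply (reflection_ext (reflection_in_F G)).
    now rewrite <- comp_assoc, Hw', Hvw, comp_id_l. }
  assert (Hw'v : w' ∘ v = @idm (FunCat T A) C).
  { apply (pointwise_epi_is_epi (fun t => cokernel_epi (Hc t))).
    now rewrite <- comp_assoc, Hv, Hw'R, comp_id_l. }
  intros t. rewrite <- (component_eq Hv t). simpl.
  apply cokernel_comp_iso; [apply Hc |].
  exists (w' t). split; [exact (component_eq Hw'v t) | exact (component_eq Hvw' t)].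
Qed.

Lemma trivial_extension_of_jointly_mono (F G : Functor T A) (alpha : NatTrans F G) :
  (forall t, is_epi A (alpha t)) -> (forall t, jointly_mono A (alpha t) (eta F t)) ->
  trivial_extension R eta alpha.
Proof.
  intros Hepi Hjm Ralpha HR.
  destruct (kernel_functor_exists HA alpha) as [K [k Hk]].
  apply pointwise_pullback_is_pullback. intros t.
  exact (epi_jointly_mono_pullback HA (Hepi t) (Hk t) (eq_sym (component_eq HR t))
    (reflection_cokernel Hepi Hk HR t) (Hjm t)).
Qed.

Lemma jointly_mono_of_trivial_extension (F G : Functor T A) (alpha : NatTrans F G) :
  trivial_extension R eta alpha -> forall t, jointly_mono A (alpha t) (eta F t).
Proof.
  intros Htriv.
  destruct (reflection_factor (reflection_in_F G) (eta G ∘ alpha)) as [Ralpha HR].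
  exact (pullback_pointwise_jointly_mono HA (Htriv Ralpha HR)).
Qed.

End Reflection.

Theorem mainTheorem4 (A T : Category) (HA : is_abelian A)
  (HT : finite_category T) (S : Ob T -> Prop) (HS : replete T S)
  (R : Functor T A -> Functor T A) (eta : forall F, NatTrans F (R F))
  (Hrefl : is_reflection S R eta)
  (F G : Functor T A) (alpha : NatTrans F G)
  (Halpha : is_regular_epi (FunCat T A) (b := F) (q := G) alpha) :
  (trivial_extension R eta alpha <->
     forall t : Ob T, jointly_mono A (alpha t) (eta F t)) /\
  (forall t : Ob T, ~ S t ->
     (jointly_mono A (alpha t) (eta F t) <-> is_iso A (alpha t))).
Proof.
  pose proof (epi_pointwise HA (regular_epi_is_epi Halpha)) as Hepi.
  split; [split |].
  - apply (jointly_mono_of_trivial_extension HA Hrefl).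
  - apply (trivial_extension_of_jointly_mono HA Hrefl), Hepi.
  - intros t Ht.
    rewrite (jointly_mono_zero_target_iff (alpha t) (eta F t)
               (reflection_zero_outside Hrefl F Ht)).
    split; [intros Hm; exact (mono_epi_is_iso HA Hm (Hepi t)) | apply iso_mono].
Qed.
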